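(* Let $p,q$ be positive integers with $1<q<p-q$ and $\gcd(p,q)=1$, let $A=\langle q,p-q\rangle$, let $s\in A\setminus\{0\}$, and let $r$ be a positive integer with $1<r<s-r$ and $\gcd(r,s)=1$; put $B=\langle r,s-r\rangle$. Let $M$ be the submonoid of $\mathbb{Q}^+$ generated by all $k/r$ with $k\in A$ and all $\frac{k'}{r}(s/r)^n$ with $k'\in B$, $n\ge1$, and let $(G,G^+)=(M+(-M),M)$. Let $D=\{x\in G^+: x\le_G (s/r)^n \text{ for some } n\ge1\}$. Then $tD\neq G^+$ for every positive integer $t\le r-1$, and $rD=G^+$.
   Context: $\langle a_1,\dots,a_k\rangle$ is the submonoid of $\mathbb{Z}^+$ generated by the $a_i$. $x\le_G y$ means $y-x\in G^+$. An interval in $G^+$ is a nonempty, upward directed, order-hereditary subset of $G^+$. For intervals $X,Y$, $X+Y=\{z\in G^+: z\le x+y,\ x\in X,\ y\in Y\}$; $tX$ is the $t$-fold sum of $X$ with itself. *)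

From mathcomp Require Import all_boot all_algebra.
Set Implicit Arguments. Unset Strict Implicit. Unset Printing Implicit Defensive.
Import GRing.Theory Num.Theory.
Local Open Scope ring_scope.

Definition nmon2 (a b : nat) (k : nat) : Prop :=
  exists i j : nat, k = (i * a + j * b)%N.

Inductive qmon (S : rat -> Prop) : rat -> Prop :=
| qmon0 : qmon S 0
| qmonS x y : S x -> qmon S y -> qmon S (x + y).

Definition Mgens (p q r s : nat) (x : rat) : Prop :=
  (exists k : nat, nmon2 q (p - q) k /\ x = k%:R / r%:R) \/
  (exists (k' n : nat), nmon2 r (s - r) k' /\ (1 <= n)%N /\
     x = k'%:R / r%:R * (s%:R / r%:R) ^+ n).

Definition Mpos (p q r s : nat) : rat -> Prop := qmon (Mgens p q r s).

Definition leG (P : rat -> Prop) (x y : rat) : Prop := P (y - x).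

Definition isum (P : rat -> Prop) (X Y : rat -> Prop) (z : rat) : Prop :=
  P z /\ exists x y, X x /\ Y y /\ leG P z (x + y).

(* t-fold sum tX (t >= 1; the 0-fold sum is taken to be {0}) *)
Fixpoint imul (P : rat -> Prop) (t : nat) (X : rat -> Prop) : rat -> Prop :=
  match t with
  | 0 => fun z => z = 0
  | 1 => X
  | n.+1 => isum P X (imul P n X)
  end.

Definition Dset (p q r s : nat) (x : rat) : Prop :=
  Mpos p q r s x /\
  exists n : nat, (1 <= n)%N /\ leG (Mpos p q r s) x ((s%:R / r%:R) ^+ n).

From mathcomp Require Import all_boot all_algebra zify ring.

(* Write u = s/r.  Every element of M lies below some c u^n, and
   j u^n <= r u^(n+j), since each multiplication by u adds (s - r) u^k >= u^k.
   Hence tD is exactly the set of elements of M below some t u^n, and rD = M.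
   For t < r, the element s of M lies below no t u^(n+1): an element of M with
   denominator dividing r^(n+1) only needs the generators up to level n (clear
   denominators and use that r and s are coprime); then, level by level,
   residues modulo r force the top coefficient to be t, and peeling it off
   ends with the impossible s r <= t s at level 0. *)
Import GRing.Theory Num.Theory.

Set Implicit Arguments.
Unset Strict Implicit.
Unset Printing Implicit Defensive.

Lemma nmon2_0 a b : nmon2 a b 0.
Proof. by exists 0, 0. Qed.

Lemma nmon2D a b x y : nmon2 a b x -> nmon2 a b y -> nmon2 a b (x + y).
Proof. by move=> [i [j ->]] [i' [j' ->]]; exists (i + i'), (j + j'); ring. Qed.

Lemma nmon2M a b c x : nmon2 a b x -> nmon2 a b (c * x).
Proof. by move=> [i [j ->]]; exists (c * i), (c * j); ring. Qed.

Lemma nmon2_reduced a b k : 0 < a -> nmon2 a b k ->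
  exists i j, j < a /\ k = i * a + j * b.
Proof.
move=> a0 [i [j ->]]; exists (i + j %/ a * b), (j %% a).
by rewrite ltn_mod a0 {1}(divn_eq j a); split => //; ring.
Qed.

(* [c = (i + j) a b] works: [c s - (i a + j b) = i (b s - 1) a + j (a s - 1) b]. *)
Lemma nmon2_cover a b s k : 0 < a -> 0 < b -> 0 < s -> nmon2 a b k ->
  exists c l, nmon2 a b l /\ c * s = k + l.
Proof.
move=> a0 b0 s0 [i [j ->]].
have [A EA] : exists A, a * s = A.+1 by exists (a * s).-1; rewrite prednK ?muln_gt0 ?a0.
have [B EB] : exists B, b * s = B.+1 by exists (b * s).-1; rewrite prednK ?muln_gt0 ?b0.
exists ((i + j) * a * b), (i * B * a + j * A * b).
split; first by exists (i * B), (j * A).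
have -> : (i + j) * a * b * s = i * a * (b * s) + j * b * (a * s) by ring.
rewrite EA EB; ring.
Qed.

Lemma eq_residue_coprime r c x y a b : coprime r c -> a < r -> b < r ->
  x * r + a * c = y * r + b * c -> a = b.
Proof.
move=> crc ar br /(congr1 (modn^~ r)); rewrite !modnMDl => ac_bc.
wlog le_ab : a b ar br ac_bc / a <= b.
  by move=> W; case: (leqP a b) => [|/ltnW] h; [exact: W | apply/esym/W].
have dvd_ba : r %| b - a.
  by rewrite -(Gauss_dvdl _ crc) mulnBl -eqn_mod_dvd ?leq_mul2r ?le_ab ?orbT // ac_bc.
apply/eqP; rewrite eqn_leq le_ab -subn_eq0; apply: contraLR dvd_ba.
by rewrite -lt0n => ba0; rewrite gtnNdvd //; lia.
Qed.

Section Numerators.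
Variables (A : nat -> Prop) (r s : nat).

(* [rep N w] says that [w / r^(N+1)] lies in
   [A/r + \sum_(1 <= n <= N) B/r (s/r)^n], where [B = <r, s - r>]. *)
Fixpoint rep (N w : nat) : Prop :=
  if N is N'.+1 then
    exists K w', nmon2 r (s - r) K /\ rep N' w' /\ w = r * w' + K * s ^ N
  else A w.

Lemma rep_lift N w : rep N w -> rep N.+1 (r * w).
Proof. by exists 0, w; split; [exact: nmon2_0 | split => //; ring]. Qed.

Lemma rep_liftn N k w : rep N w -> rep (N + k) (r ^ k * w).
Proof.
elim: k w => [|k IH] w Nw; first by rewrite addn0 mul1n.
by rewrite addnS expnS -mulnA; apply/rep_lift/IH.
Qed.

Hypotheses (le_rs : r <= s) (coprime_rs : coprime r s).

Lemma not_rep_pow_sub n w t : 0 < s -> t < r ->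
  rep n w -> w + s * r ^ n.+1 = t * s ^ n.+1 -> False.
Proof.
move=> s0; elim: n w t => [|n IH] w t tr /=.
  move=> _; rewrite !expn1 => E.
  have : s * r <= t * s by rewrite -E leq_addl.
  by rewrite mulnC leq_pmul2r // leqNgt tr.
have r0 : 0 < r by apply: leq_ltn_trans tr.
move=> [K [w' [/(nmon2_reduced r0) [i [j [jr ->]]] [Rw' ->]]]].
set X := s ^ n.+1; have sX : s ^ n.+2 = s * X by rewrite expnS.
move=> E.
(* Modulo [r] the identity reads [j s^(n+2) = t s^(n+2)], so [j = t]. *)
have Ej : (w' + i * X + s * r ^ n.+1) * r + j * (s * X) = (j * X) * r + t * (s * X).
  rewrite sX expnS in E; rewrite -E -(subnKC le_rs); move: (s - r) => d.
  by rewrite addKn; ring.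
have crX : coprime r (s * X) by rewrite coprimeMr coprime_rs coprimeXr.
have {jr}jt := eq_residue_coprime crX jr tr Ej; subst j.
move/addIn/eqP: Ej; rewrite eqn_pmul2r // => /eqP Ew'.
have X0 : 0 < X by rewrite expn_gt0 s0.
have it : i <= t by rewrite -(leq_pmul2r X0) -Ew'; lia.
apply: (IH w' (t - i)) => //; first exact: leq_ltn_trans (leq_subr i t) tr.
by rewrite mulnBl -Ew'; lia.
Qed.

Hypotheses (A0 : A 0) (AD : forall x y, A x -> A y -> A (x + y)) (As : A s).

Lemma A_muls c : A (c * s).
Proof. by elim: c => [|c IH]; [exact: A0 | rewrite mulSn; apply: AD]. Qed.

Lemma rep0 N : rep N 0.
Proof.
elim: N => [|N IH] //=.
by exists 0, 0; rewrite muln0 mul0n; split; [exact: nmon2_0 | split].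
Qed.

Lemma repD N w1 w2 : rep N w1 -> rep N w2 -> rep N (w1 + w2).
Proof.
elim: N w1 w2 => [|N IH] w1 w2 /=; first exact: AD.
move=> [K1 [w1' [BK1 [R1 ->]]]] [K2 [w2' [BK2 [R2 ->]]]].
exists (K1 + K2), (w1' + w2'); split; first exact: nmon2D.
by split; [exact: IH | ring].
Qed.

Lemma rep_addX N w c : rep N w -> rep N (w + c * s ^ N.+1).
Proof.
case: N => [|N] /=; first by rewrite expn1 => Aw; apply: AD Aw (A_muls c).
move=> [K [w' [BK [Rw' ->]]]]; exists (K + c * s), w'; split.
  by apply/nmon2D/nmon2M => //; exists 1, 1; rewrite !mul1n subnKC.
by split => //; rewrite [s ^ _.+2]expnS; ring.
Qed.

Lemma rep_div N v : 0 < r -> rep N.+1 (r * v) -> rep N v.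
Proof.
move=> r0 [K [w' [/(nmon2_reduced r0) [i [j [jr ->]]] [Rw' E]]]].
set X := s ^ N.+1 in E.
(* Modulo [r], [j s^(N+2) = 0], so [j = 0]. *)
have Ej : (v + j * X) * r + 0 * (s * X) = (w' + i * X) * r + j * (s * X).
  rewrite mulnDl [v * r]mulnC E -(subnKC le_rs); move: (s - r) => d; rewrite addKn; ring.
have crX : coprime r (s * X) by rewrite coprimeMr coprime_rs coprimeXr.
have j0 := eq_residue_coprime crX r0 jr Ej; subst j.
have -> : v = w' + i * X by apply/eqP; rewrite -(eqn_pmul2l r0) E; apply/eqP; ring.
exact: rep_addX.
Qed.

Lemma rep_divn N k v : 0 < r -> rep (N + k) (r ^ k * v) -> rep N v.
Proof.
move=> r0; elim: k v => [|k IH] v; first by rewrite addn0 mul1n.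
by rewrite addnS expnS -mulnA => /(rep_div r0)/IH.
Qed.

End Numerators.

Local Open Scope ring_scope.

Section QMonoid.
Variable S : rat -> Prop.
Local Notation le := (leG (qmon S)).

Lemma qmon_gen x : S x -> qmon S x.
Proof. by move=> Sx; rewrite -[x]addr0; apply: qmonS => //; exact: qmon0. Qed.

Lemma qmonD x y : qmon S x -> qmon S y -> qmon S (x + y).
Proof.
move=> qx; elim: qx y => [|a b Sa _ IH] y qy; first by rewrite add0r.
by rewrite -addrA; apply: qmonS => //; apply: IH.
Qed.

Lemma qmon_natmul c x : qmon S x -> qmon S (c%:R * x).
Proof.
move=> qx; elim: c => [|c IH]; first by rewrite mul0r; exact: qmon0.
by rewrite mulr_natl mulrS -mulr_natl; apply: qmonD.
Qed.

Lemma leG_refl x : le x x.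
Proof. by rewrite /leG subrr; exact: qmon0. Qed.

Lemma leG_trans y x z : le x y -> le y z -> le x z.
Proof. by rewrite /leG => xy yz; rewrite -[z - x](subrKA y); apply: qmonD. Qed.

Lemma leGD x1 y1 x2 y2 : le x1 y1 -> le x2 y2 -> le (x1 + x2) (y1 + y2).
Proof. by rewrite /leG opprD addrACA; apply: qmonD. Qed.

Lemma leG_natmul c x y : le x y -> le (c%:R * x) (c%:R * y).
Proof. by rewrite /leG -mulrBr; apply: qmon_natmul. Qed.

End QMonoid.

Section PositiveCone.
Variables p q r s : nat.
Hypotheses (r_gt0 : (0 < r)%N) (lt_rs : (r < s)%N).

Local Notation M := (Mpos p q r s).
Local Notation u := (s%:R / r%:R : rat).
Local Notation "x <=_M y" := (leG M x y) (at level 70, no associativity).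

Let r_neq0 : r%:R != 0 :> rat.
Proof. by rewrite pnatr_eq0 -lt0n. Qed.

Lemma Mpos_natmul_upow c n : (0 < n)%N -> M (c%:R * u ^+ n).
Proof.
move=> n_gt0; apply: qmon_gen; right; exists (c * r)%N, n.
by rewrite natrM mulfK //; split => //; exists c, 0%N; rewrite addn0.
Qed.

Lemma leG_upowS n : (0 < n)%N -> u ^+ n <=_M u ^+ n.+1.
Proof.
move=> n_gt0; apply: qmon_gen; right; exists (s - r)%N, n.
split; first by exists 0%N, 1%N; rewrite mul1n.
by split => //; rewrite natrB ?(ltnW lt_rs) // exprS; field.
Qed.

Lemma leG_upow m n : (0 < m)%N -> (m <= n)%N -> u ^+ m <=_M u ^+ n.
Proof.
move=> m_gt0; elim: n => [|n IH]; first by rewrite leqn0 => /eqP m0; rewrite m0 in m_gt0.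
rewrite leq_eqVlt => /orP [/eqP -> | ltmn]; first exact: leG_refl.
exact: leG_trans (IH ltmn) (leG_upowS (leq_trans m_gt0 ltmn)).
Qed.

Lemma leG_natmul_upow n j : (0 < n)%N -> j%:R * u ^+ n <=_M r%:R * u ^+ (n + j).
Proof.
move=> n_gt0; elim: j => [|j IH].
  by rewrite mul0r addn0 /leG subr0; apply: Mpos_natmul_upow.
have -> : r%:R * u ^+ (n + j.+1) = r%:R * u ^+ (n + j) + (s - r)%:R * u ^+ (n + j).
  by rewrite natrB ?(ltnW lt_rs) // addnS exprS; field.
rewrite -addn1 natrD mulrDl mul1r; apply: leGD => //.
apply: leG_trans (leG_upow n_gt0 (leq_addr j n)) _.
rewrite /leG -[X in _ - X]mul1r -mulrBl -[1]/(1%N%:R) -natrB ?subn_gt0 //.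
by apply: Mpos_natmul_upow; rewrite addn_gt0 n_gt0.
Qed.

Lemma imul_DsetE t z : (0 < t)%N ->
  imul M t (Dset p q r s) z <->
  M z /\ exists n, (1 <= n)%N /\ z <=_M t%:R * u ^+ n.
Proof.
elim: t z => [|[|t] IH] z // _.
  by split=> -[Mz [n [n_gt0 z_le]]]; split=> //; exists n; rewrite mul1r in z_le *.
have natS k (x : rat) : k.+1%:R * x = x + k%:R * x by rewrite -add1n natrD mulrDl mul1r.
split.
  move=> [Mz [x [y [[_ [n1 [n1_gt0 x_le]]] [/(IH _ isT) [_ [n2 [n2_gt0 y_le]]] z_le]]]]].
  split=> //; exists (n1 + n2)%N; split; first exact: leq_trans n1_gt0 (leq_addr _ _).
  apply: leG_trans z_le _; rewrite natS; apply: leGD.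
    exact: leG_trans x_le (leG_upow n1_gt0 (leq_addr _ _)).
  exact: leG_trans y_le (leG_natmul _ (leG_upow n2_gt0 (leq_addl _ _))).
move=> [Mz [n [n_gt0 z_le]]]; split=> //.
exists (u ^+ n), (t.+1%:R * u ^+ n); split; last split.
- split; first by have := Mpos_natmul_upow 1 n_gt0; rewrite mul1r.
  by exists n; split=> //; apply: leG_refl.
- apply/IH => //; split; first exact: Mpos_natmul_upow.
  by exists n; split=> //; apply: leG_refl.
- by rewrite -natS.
Qed.

Hypotheses (q_gt0 : (0 < q)%N) (pq_gt0 : (0 < p - q)%N).

Lemma Mgens_bounded g : Mgens p q r s g ->
  exists c n, (1 <= n)%N /\ g <=_M c%:R * u ^+ n.
Proof.
case=> [[k [Ak ->]] | [k' [n [[i [j ->]] [n_gt0 ->]]]]].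
  have [c [l [Al E]]] := nmon2_cover q_gt0 pq_gt0 (ltn_trans r_gt0 lt_rs) Ak.
  exists c, 1%N; split => //; apply: qmon_gen; left; exists l; split => //.
  have El : l%:R = c%:R * s%:R - k%:R :> rat by rewrite -natrM E natrD addrC addKr.
  by rewrite El expr1; field.
exists (i + j)%N, n.+1; split => //; rewrite /leG.
have -> : (i + j)%:R * u ^+ n.+1 - (i * r + j * (s - r))%:R / r%:R * u ^+ n
    = i%:R * (u ^+ n.+1 - u ^+ n) + j%:R * u ^+ n.
  by rewrite natrD natrD !natrM natrB ?(ltnW lt_rs) // exprS; field.
by apply: qmonD; [apply/qmon_natmul/leG_upowS | apply: Mpos_natmul_upow].
Qed.

Lemma Mpos_bounded z : M z -> exists n, (1 <= n)%N /\ z <=_M r%:R * u ^+ n.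
Proof.
move=> Mz; suff [c [n [n_gt0 z_le]]] : exists c n, (1 <= n)%N /\ z <=_M c%:R * u ^+ n.
  exists (n + c)%N; split; first exact: leq_trans n_gt0 (leq_addr _ _).
  exact: leG_trans z_le (leG_natmul_upow _ n_gt0).
elim: Mz => [|g y Mg _ [c2 [n2 [n2_gt0 y_le]]]].
  by exists 0%N, 1%N; split => //; rewrite mul0r; apply: leG_refl.
have [c1 [n1 [n1_gt0 g_le]]] := Mgens_bounded Mg.
exists (c1 + c2)%N, (n1 + n2)%N; split; first exact: leq_trans n1_gt0 (leq_addr _ _).
rewrite natrD mulrDl; apply: leGD.
  exact: leG_trans g_le (leG_natmul _ (leG_upow n1_gt0 (leq_addr _ _))).
exact: leG_trans y_le (leG_natmul _ (leG_upow n2_gt0 (leq_addl _ _))).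
Qed.

Local Notation A := (nmon2 q (p - q)).

Lemma Mpos_rep z : M z -> exists N w, rep A r s N w /\ z = w%:R / r%:R ^+ N.+1.
Proof.
have repA0 N : rep A r s N 0 := rep0 r s (nmon2_0 q (p - q)) N.
elim=> [|g y Mg _ [N2 [w2 [Rw2 ->]]]].
  by exists 0%N, 0%N; split; [exact: repA0 | rewrite mul0r].
have [N1 [w1 [Rw1 ->]]] : exists N w, rep A r s N w /\ g = w%:R / r%:R ^+ N.+1.
  case: Mg => [[k [Ak ->]] | [k' [[|n] [Bk' [// _ ->]]]]].
    by exists 0%N, k; rewrite expr1.
  exists n.+1, (k' * s ^ n.+1)%N; split.
    by exists k', 0%N; rewrite muln0 add0n; split; [|split; first exact: repA0].
  by rewrite natrM natrX expr_div_n !exprS; field; rewrite expf_neq0.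
exists (N1 + N2)%N, (r ^ N2 * w1 + r ^ N1 * w2)%N; split.
  apply: repD; [exact: nmon2D | exact: rep_liftn | rewrite addnC; exact: rep_liftn].
rewrite natrD !natrM !natrX -addSn !exprD !exprS.
by field; rewrite !expf_neq0.
Qed.

Hypotheses (As : A s) (coprime_rs : coprime r s).

Lemma not_leG_s t n : (t < r)%N -> ~ s%:R <=_M t%:R * u ^+ n.+1.
Proof.
move=> lt_tr /Mpos_rep [N [w [Rw Ew]]].
have E : (r ^ n * w + s * r ^ n.+1 * r ^ N = t * s ^ n.+1 * r ^ N)%N.
  apply/eqP; rewrite -(eqr_nat rat) !natrD !natrM !natrX; apply/eqP.
  have -> : w%:R = (t%:R * u ^+ n.+1 - s%:R) * r%:R ^+ N.+1.
    by rewrite Ew divfK // expf_neq0.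
  by rewrite expr_div_n !exprS; field; rewrite !expf_neq0.
have rN_gt0 : (0 < r ^ N)%N by rewrite expn_gt0 r_gt0.
have le_s_ts : (s * r ^ n.+1 <= t * s ^ n.+1)%N by rewrite -(leq_pmul2r rN_gt0) -E leq_addl.
set v := (t * s ^ n.+1 - s * r ^ n.+1)%N.
have Rv : rep A r s n v.
  apply: (rep_divn (ltnW lt_rs) coprime_rs (nmon2_0 _ _) (@nmon2D _ _) As (k := N) r_gt0).
  have -> : (r ^ N * v = r ^ n * w)%N by rewrite /v mulnC mulnBl -E addnK.
  by rewrite addnC; apply: rep_liftn.
by apply: (not_rep_pow_sub (ltnW lt_rs) coprime_rs _ lt_tr Rv); rewrite ?subnK // (ltn_trans r_gt0).
Qed.

End PositiveCone.

Theorem proposition2p3 (p q r s : nat) :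
  (0 < p)%N -> (0 < q)%N -> (1 < q)%N -> (q < p - q)%N -> coprime p q ->
  nmon2 q (p - q) s -> s <> 0%N ->
  (0 < r)%N -> (1 < r)%N -> (r < s - r)%N -> coprime r s ->
  (forall t : nat, (0 < t)%N -> (t <= r - 1)%N ->
     ~ (forall z : rat, imul (Mpos p q r s) t (Dset p q r s) z <-> Mpos p q r s z)) /\
  (forall z : rat, imul (Mpos p q r s) r (Dset p q r s) z <-> Mpos p q r s z).
Proof.
move=> _ q_gt0 _ lt_q_pq _ As _ r_gt0 r_gt1 lt_r_sr coprime_rs.
have lt_rs : (r < s)%N by apply: leq_trans lt_r_sr (leq_subr _ _).
have pq_gt0 : (0 < p - q)%N by apply: ltn_trans q_gt0 lt_q_pq.
split=> [t t_gt0 le_t_r1 tD_eq | z].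
  have Ms : Mpos p q r s s%:R.
    apply: qmon_gen; left; exists (r * s)%N; split; first exact: nmon2M.
    by rewrite natrM mulrC mulKf // pnatr_eq0 -lt0n.
  have [_ [[|n] [// _ s_le]]] := (imul_DsetE p q r_gt0 lt_rs _ t_gt0).1 ((tD_eq _).2 Ms).
  by apply: (not_leG_s r_gt0 lt_rs As coprime_rs _ s_le); lia.
rewrite imul_DsetE ?(ltnW r_gt1) //; split=> [[] // | Mz].
by split=> //; apply: Mpos_bounded.
Qed.
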